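(* Let $k\ge 2$ be an integer and $n=6k$. There is no balanced permutation sequence of length $n$.
   Context: Let $n$ be a positive integer, $N$ a set of $n$ players and $[n]=\{1,\ldots,n\}$ a set of $n$ items. A permutation sequence of length $n$ is an ordered tuple $(\pi_1,\ldots,\pi_n)$ of bijections $\pi_t : N\to[n]$; on day $t$ player $i$ receives item $\pi_t(i)$. For $t\in[n]$ and $i\in N$, $Z_i^t$ is the multiset $\{\pi_1(i),\ldots,\pi_t(i)\}$, and for $j\in[t]$, $Z_i^t[j]$ is the $j$-th smallest element of $Z_i^t$ (counted with multiplicity). The sequence is called balanced if for every $t\in[n]$, every $i\in N$ and every $j\in[t]$: $Z_i^t[j]\le \lceil jn/t\rceil$. *)

From mathcomp Require Import all_boot all_fingroup.
Set Implicit Arguments. Unset Strict Implicit. Unset Printing Implicit Defensive.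

(* Players N and items [n] = {1..n} are both modelled by 'I_n;
   the item represented by x : 'I_n is the natural number x.+1.
   A permutation sequence of length n is a map from days 'I_n
   (day d represents day d.+1) to permutations of 'I_n. *)
Definition perm_seq (n : nat) := 'I_n -> {perm 'I_n}.

Definition ceil_div (a b : nat) : nat := (a + b - 1) %/ b.

(* Z_i^t as a sorted list (multiset with multiplicity), items in {1..n} *)
Definition Zsorted (n : nat) (pi : perm_seq n) (i : 'I_n) (t : nat) : seq nat :=
  sort leq (map (fun d : 'I_n => (pi d i : nat).+1)
                 (filter (fun d : 'I_n => (d : nat) < t) (enum 'I_n))).

(* Z_i^t[j] for 1 <= j <= t: j-th smallest element *)
Definition Zth (n : nat) (pi : perm_seq n) (i : 'I_n) (t j : nat) : nat :=
  nth 0 (Zsorted pi i t) j.-1.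

Definition balanced (n : nat) (pi : perm_seq n) : Prop :=
  forall (t : nat), 1 <= t <= n ->
  forall (i : 'I_n) (j : nat), 1 <= j <= t ->
    Zth pi i t j <= ceil_div (j * n) t.

(* Balancedness at three moments forces a contradiction.  At t = 3k every player holds an
   item <= 2 and two items <= 4; as only 2n items <= 4 are handed out in 3k days, every player
   holds exactly two.  At t = 2k every player holds an item <= 3, and at t0 = ceil(3k/2) < 2k
   an item <= 4.  So a player with no item <= 2 before day 2k receives item 3 before day 2k
   and an item <= 2 later, hence its item <= 4 before day t0 is item 3 as well.  Counting, at
   most 2 * 2k players receive an item <= 2 before day 2k and at most t0 players receive
   item 3 before day t0, whence 6k <= 4k + t0 < 6k. *)

From mathcomp Require Import all_boot all_fingroup.
From mathcomp Require Import zify.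
Set Implicit Arguments. Unset Strict Implicit. Unset Printing Implicit Defensive.

Lemma nat_of_ltnS (x c : nat) : (x < c.+1 : nat) = (x < c) + (x == c).
Proof. by rewrite ltnS leq_eqVlt; case: ltngtP. Qed.

Lemma sum_ord_lt_const (n t m : nat) : t <= n -> \sum_(d < n | d < t) m = t * m.
Proof. by move=> le_tn; rewrite -(big_ord_widen _ (fun=> m) le_tn) sum_nat_const card_ord. Qed.

Lemma sum_ord_ltn (n c : nat) : c <= n -> \sum_(x < n) (x < c : nat) = c.
Proof. by move=> le_cn; rewrite -big_mkcondr /= sum_ord_lt_const // muln1. Qed.

Lemma sum_ord_eq (n c : nat) : c < n -> \sum_(x < n) ((x : nat) == c : nat) = 1.
Proof.
move=> lt_cn; have := sum_ord_ltn lt_cn.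
under eq_bigr => x _ do rewrite nat_of_ltnS.
by rewrite big_split /= (sum_ord_ltn (ltnW lt_cn)) -addn1 => /addnI.
Qed.

Lemma sorted_nth_count_leq (s : seq nat) (j c : nat) :
  sorted leq s -> j < size s -> nth 0 s j <= c -> j < count (leq^~ c) s.
Proof.
elim: s j => [|x s IHs] j //= path_xs lt_js le_sj_c.
have sorted_s : sorted leq s := path_sorted path_xs.
case: j lt_js le_sj_c => [|j] /= lt_js le_sj_c; first by rewrite le_sj_c.
have min_x : all (leq x) s by apply: order_path_min => //; exact: leq_trans.
by rewrite (leq_trans (allP min_x _ (mem_nth 0 lt_js)) le_sj_c) add1n ltnS IHs.
Qed.

Lemma count_enum_ord (n : nat) (p : pred 'I_n) : count p (enum 'I_n) = \sum_(d < n | p d) 1.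
Proof. by rewrite -sum1_count big_enum_cond. Qed.

Lemma ceil_div_leq (a b c : nat) : 0 < b -> a <= c * b -> ceil_div a b <= c.
Proof. by move=> b_gt0 le_a_cb; rewrite /ceil_div -ltnS ltn_divLR //; lia. Qed.

Section Received.

Variables (n : nat) (pi : perm_seq n).

(* Items are 0-based here: [P] is tested on [x], which stands for the paper's item [x + 1]. *)
Definition received (i : 'I_n) (t : nat) (P : pred nat) : nat :=
  \sum_(d < n | d < t) P (pi d i).

Lemma received_mono (i : 'I_n) (t1 t2 : nat) (P : pred nat) :
  t1 <= t2 -> received i t1 P <= received i t2 P.
Proof.
move=> le_t12; rewrite /received [X in X <= _]big_mkcond [X in _ <= X]big_mkcond.
apply: leq_sum => d _.
by case: ifP => [lt_dt1|//]; rewrite (leq_trans lt_dt1 le_t12).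
Qed.

Lemma received_ltnS (i : 'I_n) (t c : nat) :
  received i t (fun x => x < c.+1) =
  received i t (fun x => x < c) + received i t (fun x => x == c).
Proof. by rewrite /received -big_split; apply: eq_bigr => d _; rewrite nat_of_ltnS. Qed.

Lemma sum_received (t : nat) (P : pred nat) :
  t <= n -> \sum_(i < n) received i t P = t * \sum_(x < n) P x.
Proof.
move=> le_tn; rewrite exchange_big /= -(sum_ord_lt_const _ le_tn); apply: eq_bigr => d _.
by rewrite (reindex_inj (@perm_inj _ (pi d)^-1)) /=; apply: eq_bigr => x _; rewrite permKV.
Qed.

Lemma balanced_received (i : 'I_n) (t j c : nat) :
  balanced pi -> 0 < j <= t -> t <= n -> j * n <= c * t ->
  j <= received i t (fun x => x < c).
Proof.
move=> bal_pi /andP[j_gt0 le_jt] le_tn le_jn_ct.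
have le_Z_c : Zth pi i t j <= c.
  apply: leq_trans (bal_pi t _ i j _) (ceil_div_leq _ le_jn_ct); lia.
have lt_j_size : j.-1 < size (Zsorted pi i t).
  by rewrite size_sort size_map size_filter count_enum_ord sum_ord_lt_const // muln1; lia.
have := sorted_nth_count_leq (sort_sorted leq_total _) lt_j_size le_Z_c.
rewrite prednK // count_sort count_map count_filter count_enum_ord /received.
by rewrite -big_mkcondr; under eq_bigl => d do rewrite andbC.
Qed.

End Received.

Lemma sum_ord_tight (n a : nat) (F : 'I_n -> nat) (i0 : 'I_n) :
  (forall i, a <= F i) -> \sum_(i < n) F i <= a * n -> F i0 <= a.
Proof.
move=> a_le_F le_sum.
have split_sum : \sum_(i < n) F i = \sum_(i < n) (F i - a) + a * n.
  have -> : a * n = \sum_(i < n) a by rewrite sum_nat_const card_ord mulnC.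
  rewrite -big_split /=.
  by apply: eq_bigr => i _; rewrite subnK.
have : \sum_(i < n) (F i - a) == 0 by lia.
by rewrite sum_nat_eq0 => /forallP/(_ i0); rewrite subn_eq0.
Qed.

Section SixK.

Variables (k : nat) (pi : perm_seq (6 * k)).
Hypotheses (k_ge2 : 2 <= k) (bal_pi : balanced pi).

(* The least [t] with [6k <= 4t], so that by day [t0] every player holds one of the items 1..4. *)
Let t0 := (3 * k).+1 %/ 2.

Let t0_lt_2k : t0 < 2 * k. Proof. rewrite /t0; lia. Qed.

(* Every player gets at least two of the items 1..4 in the first [3k] days, while only
   [3k * 4 = 2 * 6k] of them are handed out. *)
Lemma received_3k_lt4 (i : 'I_(6 * k)) : received pi i (3 * k) (fun x => x < 4) <= 2.
Proof.
apply: (sum_ord_tight (F := fun j => received pi j _ _)) => [j|].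
  by apply: balanced_received => //; lia.
by rewrite sum_received ?sum_ord_ltn //; lia.
Qed.

(* Otherwise item 3 before day [2k], item 4 before day [t0] and one of the items 1, 2
   before day [3k] would be three items at most 4 within the first [3k] days. *)
Lemma received_lt2_or_eq2 (i : 'I_(6 * k)) :
  0 < received pi i (2 * k) (fun x => x < 2) + received pi i t0 (fun x => x == 2).
Proof.
rewrite lt0n addn_eq0; apply/negP => /andP[/eqP no_lt2 /eqP no_eq2].
have item3_early : 0 < received pi i (2 * k) (fun x => x == 2).
  have : 1 <= received pi i (2 * k) (fun x => x < 3).
    by apply: balanced_received => //; lia.
  by rewrite received_ltnS no_lt2.
have item4_early : 0 < received pi i t0 (fun x => x == 3).
  have : 1 <= received pi i t0 (fun x => x < 4) by apply: balanced_received => //; lia.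
  rewrite (received_ltnS _ _ _ 3) (received_ltnS _ _ _ 2) no_eq2.
  have := received_mono pi i (fun x => x < 2) (ltnW t0_lt_2k); lia.
have : 1 <= received pi i (3 * k) (fun x => x < 2) by apply: balanced_received => //; lia.
have := received_3k_lt4 i; rewrite (received_ltnS _ _ _ 3) (received_ltnS _ _ _ 2).
have le_2k_3k : 2 * k <= 3 * k by lia.
have := received_mono pi i (fun x => x == 2) le_2k_3k.
have := received_mono pi i (fun x => x == 3) (leq_trans (ltnW t0_lt_2k) le_2k_3k).
lia.
Qed.

Lemma balanced_6k_absurd : False.
Proof.
have : \sum_(i < 6 * k) 1 <=
       \sum_(i < 6 * k) (received pi i (2 * k) (fun x => x < 2) +
                         received pi i t0 (fun x => x == 2)).
  by apply: leq_sum => i _; exact: received_lt2_or_eq2.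
rewrite big_split /= sum_nat_const card_ord !sum_received ?sum_ord_ltn ?sum_ord_eq; lia.
Qed.

End SixK.

Theorem mainTheorem2 (k : nat) : 2 <= k ->
  ~ exists pi : perm_seq (6 * k), balanced pi.
Proof. by move=> k_ge2 [pi bal_pi]; apply: balanced_6k_absurd bal_pi. Qed.
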